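(* Let $n$ be a positive integer and let $\mathcal F$ be an $\mathcal N$-saturated family of subsets of $[n]$. Let $B'\subseteq[n]$ with $B'\notin\mathcal F$, and suppose there exists $B\in\mathcal F$ with $B\subset B'$, and that $B'$ is a minimal element of some induced copy of $\mathcal N$ in $\mathcal F\cup\{B'\}$. Then there exists an induced copy of $\mathcal N$ in $\mathcal F\cup\{B'\}$ in which $B'$ is a minimal element and the other minimal element contains $B$ as a subset.
   Context: The poset $\mathcal N$ has four elements $a,b,c,d$ with $a<c$, $b<c$, $b<d$ and no other comparabilities (so $a,b$ are its minimal elements and $c,d$ its maximal elements). A family $\mathcal Q$ of sets (ordered by inclusion) contains an induced copy of $\mathcal N$ if there are distinct sets in $\mathcal Q$ whose inclusion relations are exactly those of $a,b,c,d$ above. A family $\mathcal F$ of subsets of $[n]=\{1,\dots,n\}$ is $\mathcal N$-saturated if $\mathcal F$ contains no induced copy of $\mathcal N$, but for every $S\subseteq[n]$ with $S\notin\mathcal F$, the family $\mathcal F\cup\{S\}$ contains an induced copy of $\mathcal N$. *)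

(* Subsets of [n] are modelled as {set 'I_n}. *)
From mathcomp Require Import all_boot.
Set Implicit Arguments. Unset Strict Implicit. Unset Printing Implicit Defensive.

Definition incomp (n : nat) (A B : {set 'I_n}) : bool :=
  ~~ (A \subset B) && ~~ (B \subset A).

(* (a, b, c, d) is an induced copy of N: a < c, b < c, b < d and no other
   comparabilities (distinctness follows). a, b are the minimal elements. *)
Definition is_N (n : nat) (a b c d : {set 'I_n}) : bool :=
  [&& a \proper c, b \proper c, b \proper d,
      incomp a b, incomp a d & incomp c d].

Definition contains_N (n : nat) (Q : {set {set 'I_n}}) : Prop :=
  exists a b c d : {set 'I_n},
    [/\ a \in Q, b \in Q, c \in Q, d \in Q & is_N a b c d].

Definition N_saturated (n : nat) (F : {set {set 'I_n}}) : Prop :=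
  ~ contains_N F /\ (forall S : {set 'I_n}, S \notin F -> contains_N (S |: F)).

From mathcomp Require Import all_boot.

(* Let (B', b, c, d) be a copy of N in F ∪ {B'}; when B' is the other minimal
   vertex, B lies below a, since otherwise B could replace B' in the copy.  If
   b does not contain B, then B ⊆ d, for otherwise (B, b, c, d) would be a copy
   inside F.  Replace b by the union T of all members of F inside c ∩ d: T
   contains b and B, and (B', T, c, d) is still a copy.  The point is that
   T ∈ F: adding T to the N-saturated F would create a copy of N, and whichever
   vertex T is in it, T being the union of the members of F below c ∩ d turns
   that copy into one lying inside F. *)

Lemma in_setU1_neq {T : finType} {x y : T} {A : {set T}} :
  x \in y |: A -> y != x -> x \in A.
Proof. by case/setU1P => [->|//]; rewrite eqxx. Qed.

Lemma incomp_neq {n : nat} {A B : {set 'I_n}} : incomp A B -> A != B.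
Proof. by apply: contraTneq => ->; rewrite /incomp subxx. Qed.

Definition bigcup_below {T : finType} (F : {set {set T}}) (X : {set T}) : {set T} :=
  \bigcup_(W in F | W \subset X) W.

Section BigcupBelow.
Context {T : finType} {F : {set {set T}}} {X : {set T}}.
Implicit Types A W : {set T}.

Lemma sub_bigcup_below {W} : W \in F -> W \subset X -> W \subset bigcup_below F X.
Proof. by move=> WF WX; apply: (bigcup_sup W); rewrite WF WX. Qed.

Lemma bigcup_below_least {A} :
  (forall W, W \in F -> W \subset X -> W \subset A) -> bigcup_below F X \subset A.
Proof. by move=> sub_A; apply/bigcupsP => W /andP[]; apply: sub_A. Qed.

Lemma bigcup_below_sub : bigcup_below F X \subset X.
Proof. exact: bigcup_below_least. Qed.

End BigcupBelow.

Section NFree.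
Context {n : nat} {F : {set {set 'I_n}}}.
Hypothesis F_N_free : ~ contains_N F.
Implicit Types a b c d p q r s B E W Y : {set 'I_n}.

Lemma N_free_no_copy {a b c d} :
  a \in F -> b \in F -> c \in F -> d \in F -> ~~ is_N a b c d.
Proof. by move=> aF bF cF dF; apply/negP => abcd; apply: F_N_free; exists a, b, c, d. Qed.

Lemma N_free_setU1 {Y} :
  (forall q r s, q \in F -> r \in F -> s \in F ->
     [&& ~~ is_N Y q r s, ~~ is_N q Y r s, ~~ is_N q r Y s & ~~ is_N q r s Y]) ->
  ~ contains_N (Y |: F).
Proof.
move=> Y_no_N [a [b [c [d [aF bF cF dF]]]]]; apply/negP.
(* The vertices of a copy of N are distinct, so Y occurs in it at most once. *)
move: aF bF cF dF => /setU1P[->|aF] /setU1P[->|bF] /setU1P[->|cF] /setU1P[->|dF];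
  first
  [ exact: N_free_no_copy | by rewrite /is_N /incomp ?properxx ?subxx /= ?andbF
  | by case/and4P: (Y_no_N _ _ _ bF cF dF) | by case/and4P: (Y_no_N _ _ _ aF cF dF)
  | by case/and4P: (Y_no_N _ _ _ aF bF dF) | by case/and4P: (Y_no_N _ _ _ aF bF cF) ].
Qed.

Section BigcupBelowRoles.
Context {X : {set 'I_n}}.
Let T := bigcup_below F X.

Lemma not_is_N_bigcup_below_a q r s :
  q \in F -> r \in F -> s \in F -> ~~ is_N T q r s.
Proof.
move=> qF rF sF; apply/negP => /and5P[Tr qr qs /andP[_ nqT] /andP[/andP[nTs nsT] rs]].
suff Ts : T \subset s by rewrite Ts in nTs.
apply: bigcup_below_least => W WF WX; have WT : W \subset T := sub_bigcup_below WF WX.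
have := N_free_no_copy WF qF rF sF; apply: contraR => nWs.
have nWq : ~~ (W \subset q) by apply: contra nWs => Wq; exact: subset_trans Wq (proper_sub qs).
have nqW : ~~ (q \subset W) := contra (fun qW => subset_trans qW WT) nqT.
have nsW : ~~ (s \subset W) := contra (fun sW => subset_trans sW WT) nsT.
by rewrite /is_N (sub_proper_trans WT Tr) qr qs rs /incomp nWq nqW nWs nsW.
Qed.

Lemma not_is_N_bigcup_below_b p r s :
  p \in F -> r \in F -> s \in F -> ~~ is_N p T r s.
Proof.
move=> pF rF sF; apply/negP => /and5P[pr Tr Ts /andP[npT nTp] /andP[ps rs]].
suff Tp : T \subset p by rewrite Tp in nTp.
apply: bigcup_below_least => W WF WX; have WT : W \subset T := sub_bigcup_below WF WX.
have := N_free_no_copy pF WF rF sF; apply: contraR => nWp.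
have npW : ~~ (p \subset W) := contra (fun pW => subset_trans pW WT) npT.
by rewrite /is_N (sub_proper_trans WT Tr) (sub_proper_trans WT Ts) pr ps rs /incomp npW nWp.
Qed.

End BigcupBelowRoles.

Section BigcupBelowMeetRoles.
Context {C D : {set 'I_n}}.
Hypotheses (CF : C \in F) (DF : D \in F).
Let T := bigcup_below F (C :&: D).

Let TC : T \subset C := subset_trans bigcup_below_sub (subsetIl C D).
Let TD : T \subset D := subset_trans bigcup_below_sub (subsetIr C D).

Lemma not_is_N_bigcup_below_meet_c p q s :
  p \in F -> q \in F -> s \in F -> ~~ is_N p q T s.
Proof.
move=> pF qF sF; apply/negP => /and5P[pT qT qs pq /andP[ps /andP[nTs nsT]]].
suff sT : s \subset T by rewrite sT in nsT.
have above_T E : E \in F -> T \subset E -> s \subset E.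
  move=> EF TE; have nEs : ~~ (E \subset s) := contra (subset_trans TE) nTs.
  have := N_free_no_copy pF qF EF sF; apply: contraR => nsE.
  by rewrite /is_N (proper_sub_trans pT TE) (proper_sub_trans qT TE) qs pq ps /incomp nEs nsE.
by apply: sub_bigcup_below; rewrite // subsetI !above_T.
Qed.

Lemma not_is_N_bigcup_below_meet_d p q r :
  p \in F -> q \in F -> r \in F -> ~~ is_N p q r T.
Proof.
move=> pF qF rF; apply/negP => /and5P[pr qr qT pq /andP[/andP[npT nTp] /andP[_ nTr]]].
suff pT : p \subset T by rewrite pT in npT.
have above_T E : E \in F -> T \subset E -> p \subset E.
  move=> EF TE; have := N_free_no_copy pF qF rF EF; apply: contraR => npE.
  have nrE : ~~ (r \subset E) by apply: contra npE; apply: subset_trans (proper_sub pr).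
  have nEp : ~~ (E \subset p) := contra (subset_trans TE) nTp.
  have nEr : ~~ (E \subset r) := contra (subset_trans TE) nTr.
  by rewrite /is_N pr qr (proper_sub_trans qT TE) pq /incomp npE nEp nrE nEr.
by apply: sub_bigcup_below; rewrite // subsetI !above_T.
Qed.

End BigcupBelowMeetRoles.

Lemma N_free_sub_left_min {B B' a c d} :
  B \in F -> B \proper B' ->
  a \in F -> c \in F -> d \in F -> is_N a B' c d -> B \subset a.
Proof.
move=> BF BB' aF cF dF /and5P[ac B'c B'd /andP[naB' _] /andP[ad cd]].
have := N_free_no_copy aF BF cF dF; apply: contraR => nBa.
have naB : ~~ (a \subset B) := contra (fun aB => subset_trans aB (proper_sub BB')) naB'.
by rewrite /is_N ac (proper_trans BB' B'c) (proper_trans BB' B'd) ad cd /incomp naB nBa.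
Qed.

End NFree.

Section NSaturated.
Context {n : nat} {F : {set {set 'I_n}}}.
Hypothesis F_sat : N_saturated F.
Let F_N_free : ~ contains_N F := F_sat.1.
Implicit Types B b c d C D : {set 'I_n}.

Lemma N_saturated_bigcup_below_meet C D :
  C \in F -> D \in F -> bigcup_below F (C :&: D) \in F.
Proof.
move=> CF DF; apply: contraT => TnF.
exfalso; apply: (N_free_setU1 F_N_free _ (F_sat.2 _ TnF)) => q r s qF rF sF.
apply/and4P; split.
- exact: not_is_N_bigcup_below_a.
- exact: not_is_N_bigcup_below_b.
- exact: not_is_N_bigcup_below_meet_c.
- exact: not_is_N_bigcup_below_meet_d.
Qed.

Lemma N_saturated_sub_right_min {B B' b c d} :
  B \in F -> B \proper B' ->
  b \in F -> c \in F -> d \in F -> is_N B' b c d ->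
  exists b', [/\ b' \in F, B \subset b' & is_N B' b' c d].
Proof.
move=> BF BB' bF cF dF B'bcd.
move: (B'bcd) => /and5P[B'c bc bd /andP[_ nbB'] /andP[/andP[nB'd ndB'] /andP[ncd ndc]]].
have [Bb|nBb] := boolP (B \subset b); first by exists b.
have Bc : B \proper c := proper_trans BB' B'c.
have Bd : B \subset d.
  have := N_free_no_copy F_N_free BF bF cF dF; apply: contraR => nBd.
  have nbB := contra (fun bB => subset_trans bB (proper_sub BB')) nbB'.
  have ndB := contra (fun dB => subset_trans dB (proper_sub BB')) ndB'.
  by rewrite /is_N Bc bc bd /incomp nBb nbB nBd ndB ncd ndc.
pose T := bigcup_below F (c :&: d).
have [Tc Td] : T \subset c /\ T \subset d by apply/subsetIP; apply: bigcup_below_sub.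
have bT : b \subset T by apply: sub_bigcup_below; rewrite // subsetI !proper_sub.
exists T; split.
- exact: N_saturated_bigcup_below_meet.
- by apply: sub_bigcup_below; rewrite // subsetI Bd proper_sub.
have ncT : ~~ (c \subset T) := contra (fun cT => subset_trans cT Td) ncd.
have ndT : ~~ (d \subset T) := contra (fun dT => subset_trans dT Tc) ndc.
have nB'T : ~~ (B' \subset T) := contra (fun B'T => subset_trans B'T Td) nB'd.
have nTB' : ~~ (T \subset B') := contra (subset_trans bT) nbB'.
by rewrite /is_N B'c !properE Tc Td /incomp ncT ndT nB'T nTB' nB'd ndB' ncd ndc.
Qed.

End NSaturated.

Theorem lemma3p2 (n : nat) (F : {set {set 'I_n}}) (B B' : {set 'I_n}) :
  0 < n ->
  N_saturated F ->
  B' \notin F ->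
  B \in F ->
  B \proper B' ->
  (exists a b c d : {set 'I_n},
      [/\ [/\ a \in B' |: F, b \in B' |: F, c \in B' |: F & d \in B' |: F],
          is_N a b c d & (a = B' \/ b = B')]) ->
  exists a b c d : {set 'I_n},
    [/\ [/\ a \in B' |: F, b \in B' |: F, c \in B' |: F & d \in B' |: F],
        is_N a b c d &
        ((a = B' /\ B \subset b) \/ (b = B' /\ B \subset a))].
Proof.
move=> _ F_sat _ BF BB' [a [b [c [d [[aF bF cF dF] abcd [Ea|Eb]]]]]].
- subst a; case/and5P: (abcd) => B'c _ _ B'b /andP[B'd _].
  have bF' : b \in F := in_setU1_neq bF (incomp_neq B'b).
  have cF' : c \in F := in_setU1_neq cF (proper_neq B'c).
  have dF' : d \in F := in_setU1_neq dF (incomp_neq B'd).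
  have [b' [b'F Bb' B'b'cd]] := N_saturated_sub_right_min F_sat BF BB' bF' cF' dF' abcd.
  by exists B', b', c, d; split; [split; rewrite ?setU11 ?setU1r | | left].
- subst b; case/and5P: (abcd) => _ B'c B'd aB' _.
  have aF' : a \in F by apply: (in_setU1_neq aF); rewrite eq_sym incomp_neq.
  have cF' : c \in F := in_setU1_neq cF (proper_neq B'c).
  have dF' : d \in F := in_setU1_neq dF (proper_neq B'd).
  have Ba := N_free_sub_left_min F_sat.1 BF BB' aF' cF' dF' abcd.
  by exists a, B', c, d; split; [split | | right].
Qed.
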